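(* For every semistandard hook-valued tableau $T$, the tableau $\mathcal{V}_b(T)$ obtained by applying the uncrowding bumping to $T$ is again a semistandard hook-valued tableau.
   Context: French notation: row $1$ is the bottom row, rows are numbered upward, columns from left to right; cell $(r,c)$ lies in row $r$ and column $c$. A semistandard tableau of hook shape $U$ consists of a hook entry $x$ (the corner box), a leg $\ell_1<\dots<\ell_p$ stacked above $x$ with $x<\ell_1$, and an arm $a_1\le\dots\le a_q$ to the right of $x$ with $x\le a_1$ ($p,q\ge 0$, positive integer entries); write $\mathsf H(U)=x$, $\mathsf L(U)=(\ell_1,\dots,\ell_p)$, $\mathsf L^+(U)=(x,\ell_1,\dots,\ell_p)$ (extended leg), $\mathsf A(U)=(a_1,\dots,a_q)$. A (semistandard) hook-valued tableau (HVT) of partition shape $\lambda$ is a filling of the cells of the Young diagram of $\lambda$ by such hook tableaux such that $\max(A)\le\min(B)$ whenever the cell containing $A$ is in the same row and left of the cell containing $B$, and $\max(A)<\min(C)$ whenever the cell containing $A$ is in the same column and below the cell containing $C$. For a cell $(r,c)$ of $T$ write $\mathsf H_T(r,c),\mathsf L_T(r,c),\mathsf L^+_T(r,c),\mathsf A_T(r,c)$. The arm excess of $T$ is the total number of arm entries over all cells. Uncrowding bumping $\mathcal V_b$: if $T$ has arm excess $0$, $\mathcal V_b(T)=T$. Otherwise let $c$ be the largest index of a column containing a cell with nonempty arm; among the cells of column $c$ with nonempty arm let $(r,c)$ be the one whose arm contains the largest value (the topmost such cell). Let $a$ be the largest (rightmost) arm entry of $(r,c)$, $\ell$ the largest leg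 entry of $(r,c)$, and let $(a,\ell]\cap\mathsf L_T(r,c)$ denote the set of leg entries $x$ of $(r,c)$ with $a<x\le \ell$ (empty if the leg is empty). In column $c+1$ find the smallest entry (among all entries of all cells of column $c+1$) that is $\ge a$. If none exists, attach a new empty cell on top of column $c+1$, let $\tilde r$ be its row and let $k$ be the empty character; otherwise let $k$ be this entry and $(\tilde r,c+1)$ the cell containing it. (a) If $\tilde r\ne r$: remove $a$ from $\mathsf A_T(r,c)$, put $a$ in the position of $k$ in cell $(\tilde r,c+1)$ (if the cell is new, $a$ becomes its hook entry), and append $k$ (if nonempty) to the arm of $(\tilde r,c+1)$. (b) If $\tilde r=r$: remove the entries $(a,\ell]\cap\mathsf L_T(r,c)$ from the leg of $(r,c)$ and remove $a$ from the arm of $(r,c)$, insert these leg entries into the leg of $(r,c+1)$, replace the hook entry of $(r,c+1)$ by $a$, and append $k$ (if nonempty) to the arm of $(r,c+1)$. The resulting tableau is $\mathcal V_b(T)$. *)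

(* French notation, 1-indexed rows/columns. *)
From mathcomp Require Import all_boot.
Set Implicit Arguments. Unset Strict Implicit. Unset Printing Implicit Defensive.

(* A hook tableau U = (x, leg, arm): hook (corner) entry x, leg l_1..l_p
   (bottom to top), arm a_1..a_q (left to right). *)
Definition hook := (nat * seq nat * seq nat)%type.
Definition hH (U : hook) : nat := U.1.1.
Definition hL (U : hook) : seq nat := U.1.2.
Definition hA (U : hook) : seq nat := U.2.
Definition hentries (U : hook) : seq nat := hH U :: hL U ++ hA U.
Definition hmin (U : hook) : nat := foldr minn (hH U) (hL U ++ hA U).
Definition hmax (U : hook) : nat := foldr maxn (hH U) (hL U ++ hA U).

Definition ss_hook (U : hook) : bool :=
  [&& 0 < hH U, sorted ltn (hH U :: hL U) & sorted leq (hH U :: hA U)].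

Definition tableau := nat -> nat -> option hook.

(* la = (la_1 >= la_2 >= ... > 0), la_i = length of row i (row 1 = bottom). *)
Definition is_partition (la : seq nat) : bool :=
  sorted geq la && all (fun n => 0 < n) la.
Definition in_shape (la : seq nat) (r c : nat) : bool :=
  [&& 0 < r, r <= size la, 0 < c & c <= nth 0 la r.-1].

Definition is_HVT (la : seq nat) (T : tableau) : Prop :=
  [/\ is_partition la,
      (forall r c, (T r c != None) = in_shape la r c),
      (forall r c U, T r c = Some U -> ss_hook U),
      (forall r c c' U V, c < c' -> T r c = Some U -> T r c' = Some V ->
          hmax U <= hmin V) &
      (forall r r' c U V, r < r' -> T r c = Some U -> T r' c = Some V ->
          hmax U < hmin V)].

Definition dflt_hook : hook := (0, [::], [::]).
Definition cellT (T : tableau) (r c : nat) : hook := odflt dflt_hook (T r c).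
Definition cells (la : seq nat) : seq (nat * nat) :=
  [seq (r, c) | r <- iota 1 (size la), c <- iota 1 (nth 0 la r.-1)].
Definition arm_cells (la : seq nat) (T : tableau) : seq (nat * nat) :=
  [seq p <- cells la | hA (cellT T p.1 p.2) != [::]].
Definition upd (T : tableau) (r c : nat) (o : option hook) : tableau :=
  fun r' c' => if (r' == r) && (c' == c) then o else T r' c'.
Definition seqmax (s : seq nat) : nat := foldr maxn 0 s.
Definition maxarm (U : hook) : nat := seqmax (hA U).

Definition Vb (la : seq nat) (T : tableau) : seq nat * tableau :=
  let AC := arm_cells la T in
  if AC is [::] then (la, T) else
  let c := seqmax [seq p.2 | p <- AC] in
  let ACc := [seq p <- AC | p.2 == c] in
  let m := seqmax [seq maxarm (cellT T p.1 p.2) | p <- ACc] in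
  let r := seqmax [seq p.1 | p <- ACc & maxarm (cellT T p.1 p.2) == m] in
  let U := cellT T r c in
  let a := last 0 (hA U) in
  let l := last 0 (hL U) in
  let armU := take (size (hA U)).-1 (hA U) in
  let moved := [seq x <- hL U | a < x <= l] in
  let keptL := [seq x <- hL U | ~~ (a < x <= l)] in
  let cand := [seq q <- [seq (r', e) | r' <- [seq r' <- iota 1 (size la)
                                              | in_shape la r' c.+1],
                                        e <- hentries (cellT T r' c.+1)]
               | a <= q.2] in
  if cand is [::] then
    (* new empty cell on top of column c+1, k empty *)
    let rt := (count (fun n => c.+1 <= n) la).+1 in
    let la' := incr_nth la rt.-1 in
    if rt != r then
      (la', upd (upd T r c (Some (hH U, hL U, armU))) rt c.+1 (Some (a, [::], [::])))
    else
      (la', upd (upd T r c (Some (hH U, keptL, armU))) r c.+1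
                 (Some (a, sort leq moved, [::])))
  else
    let vals := [seq q.2 | q <- cand] in
    let k := foldr minn (head 0 vals) vals in
    let rt := (nth (0, 0) cand (index k vals)).1 in
    let old := cellT T rt c.+1 in
    if rt != r then
      let Lp := hH old :: hL old in
      let Lp' := set_nth 0 Lp (index k Lp) a in
      (la, upd (upd T r c (Some (hH U, hL U, armU))) rt c.+1
                (Some (head 0 Lp', behead Lp', rcons (hA old) k)))
    else
      (la, upd (upd T r c (Some (hH U, keptL, armU))) r c.+1
                (Some (a, sort leq (moved ++ hL old), rcons (hA old) k))).

From mathcomp Require Import all_boot zify.

(* Let (r, c) be the bumped cell, a its largest arm entry, and (rt, c+1) the cell
   receiving a: the cell holding the least entry k >= a of column c+1, or a new
   cell on top of that column if there is none.  Since column c+1 carries no arms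
   and a <= max (r, c) <= min (r, c+1), we get rt <= r, every cell of column c+1
   below rt lies entirely below a, and the new hook at (rt, c+1) has entries that
   are >= a or taken from the old hook there, none above its old maximum.
   Meanwhile (r, c) only loses entries, and when rt = r what it keeps is <= a.
   These are the hypotheses of two local facts: shrinking the range of one cell
   keeps a tableau semistandard, and so does placing such a hook at (i, j) when
   the cells left of (i, j) are <= a and those below it are < a. *)

Set Implicit Arguments. Unset Strict Implicit. Unset Printing Implicit Defensive.

Lemma foldr_minn_mem x s : foldr minn x s \in x :: s.
Proof.
elim: s => [|y s IH] /=; first exact: mem_head.
rewrite /minn; case: ifP => _; first by rewrite !inE eqxx orbT.
by move: IH; rewrite !inE => /orP[->|->]; rewrite ?orbT.
Qed.

Lemma foldr_minn_leq x s e : e \in x :: s -> foldr minn x s <= e.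
Proof.
elim: s => [|y s IH] /=; first by rewrite inE => /eqP->.
rewrite !inE geq_min => /or3P[es|/eqP->|es]; first by rewrite IH ?inE ?es ?orbT.
  by rewrite leqnn.
by rewrite IH ?inE ?es ?orbT.
Qed.

Lemma foldr_maxn_mem x s : foldr maxn x s \in x :: s.
Proof.
elim: s => [|y s IH] /=; first exact: mem_head.
rewrite /maxn; case: ifP => _; last by rewrite !inE eqxx orbT.
by move: IH; rewrite !inE => /orP[->|->]; rewrite ?orbT.
Qed.

Lemma foldr_maxn_geq x s e : e \in x :: s -> e <= foldr maxn x s.
Proof.
elim: s => [|y s IH] /=; first by rewrite inE => /eqP->.
rewrite !inE leq_max => /or3P[es|/eqP->|es]; first by rewrite IH ?inE ?es ?orbT.
  by rewrite leqnn.
by rewrite IH ?inE ?es ?orbT.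
Qed.

Lemma seqmax_geq s e : e \in s -> e <= seqmax s.
Proof. by move=> es; apply: foldr_maxn_geq; rewrite inE es orbT. Qed.

Lemma seqmax_mem s : s != [::] -> seqmax s \in s.
Proof.
case: s => [|y s] // _; have := foldr_maxn_mem 0 (y :: s); rewrite inE.
case/orP=> [/eqP E|//]; have := seqmax_geq (mem_head y s).
by rewrite /seqmax E leqn0 => /eqP ->; rewrite mem_head.
Qed.

Lemma sorted_leq_last x s e : sorted leq (x :: s) -> e \in x :: s -> e <= last x s.
Proof.
elim: s x e => [|y s IH] x e /=; first by move=> _; rewrite inE => /eqP->.
case/andP=> le_xy path_ys; rewrite inE => /orP[/eqP->|]; last exact: IH.
exact: leq_trans le_xy (IH _ _ path_ys (mem_head _ _)).
Qed.

Lemma hmin_mem U : hmin U \in hentries U.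
Proof. exact: foldr_minn_mem. Qed.

Lemma hmax_mem U : hmax U \in hentries U.
Proof. exact: foldr_maxn_mem. Qed.

Lemma hmin_leq U e : e \in hentries U -> hmin U <= e.
Proof. exact: foldr_minn_leq. Qed.

Lemma hmax_geq U e : e \in hentries U -> e <= hmax U.
Proof. exact: foldr_maxn_geq. Qed.

Lemma leq_hmin U n : (forall e, e \in hentries U -> n <= e) -> n <= hmin U.
Proof. by apply; apply: hmin_mem. Qed.

Lemma geq_hmax U n : (forall e, e \in hentries U -> e <= n) -> hmax U <= n.
Proof. by apply; apply: hmax_mem. Qed.

Lemma hmin_leq_hmax U : hmin U <= hmax U.
Proof. exact/hmin_leq/hmax_mem. Qed.

Lemma hmin_subset U V : {subset hentries U <= hentries V} -> hmin V <= hmin U.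
Proof. by move=> sUV; apply: leq_hmin => e /sUV; apply: hmin_leq. Qed.

Lemma hmax_subset U V : {subset hentries U <= hentries V} -> hmax U <= hmax V.
Proof. by move=> sUV; apply: geq_hmax => e /sUV; apply: hmax_geq. Qed.

Lemma hentriesE x L A : hentries (x, L, A) = x :: L ++ A.
Proof. by []. Qed.

Lemma ss_hookE x L A : ss_hook (x, L, A) = [&& 0 < x, sorted ltn (x :: L) & sorted leq (x :: A)].
Proof. by []. Qed.

Lemma ss_hook_rcons_arm x L A a : ss_hook (x, L, rcons A a) ->
  [/\ ss_hook (x, L, A), x <= a & all (fun y => y <= a) A].
Proof.
case/and3P=> x_gt0 sorted_L sorted_Aa; have := sorted_Aa.
rewrite /= rcons_path => /andP[sorted_A _].
have le_a e : e \in x :: A -> e <= a.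
  move=> eA; rewrite -(last_rcons x A a); apply: sorted_leq_last sorted_Aa _.
  by rewrite -rcons_cons mem_rcons inE eA orbT.
split; first by apply/and3P.
  exact/le_a/mem_head.
by apply/allP => e eA; apply: le_a; rewrite inE eA orbT.
Qed.

Lemma ss_hook_filter_leg x L A p : ss_hook (x, L, A) -> ss_hook (x, filter p L, A).
Proof.
by rewrite !ss_hookE => /and3P[-> sorted_L ->]; rewrite andbT /= (path_filter ltn_trans).
Qed.

Lemma hentries_sub x L A L' A' : {subset L' <= L} -> {subset A' <= A} ->
  {subset hentries (x, L', A') <= hentries (x, L, A)}.
Proof.
move=> sL sA e; rewrite !inE !mem_cat => /or3P[-> //|/sL->|/sA->]; by rewrite ?orbT.
Qed.

Lemma kept_leg_leq x L a y : sorted ltn (x :: L) ->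
  y \in [seq z <- L | ~~ (a < z <= last 0 L)] -> y <= a.
Proof.
move=> sorted_L; rewrite mem_filter negb_and -leqNgt -ltnNge.
case/andP=> [/orP[// | lt_last] yL]; have yxL : y \in x :: L by rewrite inE yL orbT.
have := sorted_leq_last (sub_sorted ltnW sorted_L) yxL.
by case: L {sorted_L yxL} yL lt_last => //= z L _ lt_last; rewrite leqNgt lt_last.
Qed.

Lemma sorted_ltn_sort a M : uniq M -> all (ltn a) M -> sorted ltn (a :: sort leq M).
Proof.
move=> uniq_M lt_aM; rewrite /= (path_sortedE ltn_trans) ltn_sorted_uniq_leq.
rewrite sort_uniq uniq_M sort_sorted ?andbT; last exact: leq_total.
by apply/allP => e; rewrite mem_sort => /(allP lt_aM).
Qed.

Lemma sorted_set_nth_index s k a : sorted ltn s -> k \in s -> a <= k ->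
  (forall e, e \in s -> e < k -> e < a) -> sorted ltn (set_nth 0 s (index k s) a).
Proof.
move=> sorted_s k_s le_ak below; case/splitPr: k_s sorted_s below => p1 p2 sorted_s below.
move: (sorted_s); rewrite (sorted_pairwise ltn_trans) pairwise_cat /=.
case/and4P=> p1_k pairwise_p1 k_p2 pairwise_p2.
have p1_lt_a u : u \in p1 -> u < a.
  by move=> up1; apply: below; [rewrite mem_cat up1 | apply: (allrelP p1_k) (mem_head _ _)].
have -> : index k (p1 ++ k :: p2) = size p1.
  rewrite index_cat /= eqxx addn0; case: ifP => // /p1_lt_a.
  by rewrite ltnNge le_ak.
have -> : set_nth 0 (p1 ++ k :: p2) (size p1) a = p1 ++ a :: p2 by elim: (p1) => //= u p ->.
rewrite (sorted_pairwise ltn_trans) pairwise_cat /= pairwise_p1 pairwise_p2 !andbT.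
have lt_a_p2 : all (ltn a) p2 by apply/allP => v vp2; apply: leq_ltn_trans le_ak (allP k_p2 v vp2).
rewrite lt_a_p2 !andbT; apply/allrelP => u v up1; rewrite inE => /orP[/eqP-> | vp2].
  exact: p1_lt_a.
exact: ltn_trans (p1_lt_a u up1) (allP lt_a_p2 v vp2).
Qed.

Lemma ss_hook_replace xo Lo k a : ss_hook (xo, Lo, [::]) -> k \in xo :: Lo -> 0 < a <= k ->
  (forall e, e \in xo :: Lo -> e < k -> e < a) ->
  let s := set_nth 0 (xo :: Lo) (index k (xo :: Lo)) a in
  ss_hook (head 0 s, behead s, [:: k]) /\
  {subset hentries (head 0 s, behead s, [:: k]) <= a :: xo :: Lo}.
Proof.
rewrite ss_hookE => /and3P[xo_gt0 sorted_old _] k_old /andP[a_gt0 le_ak] below s.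
have sorted_s : sorted ltn s := sorted_set_nth_index sorted_old k_old le_ak below.
have s_split : s = take (index k (xo :: Lo)) (xo :: Lo) ++
                   a :: drop (index k (xo :: Lo)).+1 (xo :: Lo).
  by rewrite /s set_nthE index_mem k_old.
have mem_s : {subset s <= a :: xo :: Lo}.
  move=> e; rewrite s_split mem_cat inE => /or3P[/mem_take ex | /eqP-> | /mem_drop ex].
  - by rewrite inE ex orbT.
  - exact: mem_head.
  - by rewrite inE ex orbT.
have a_s : a \in s by rewrite s_split mem_cat mem_head orbT.
have pos e : e \in a :: xo :: Lo -> 0 < e.
  rewrite !inE => /or3P[/eqP-> // | /eqP-> // | eLo].
  exact: leq_trans xo_gt0 (ltnW (allP (order_path_min ltn_trans sorted_old) e eLo)).
clearbody s; case: s {s_split} a_s sorted_s mem_s => [// | y t] a_s sorted_s mem_s /=.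
have le_ya : y <= a.
  move: a_s; rewrite inE => /orP[/eqP-> // | a_t].
  exact: ltnW (allP (order_path_min ltn_trans sorted_s) a a_t).
split.
  by rewrite ss_hookE sorted_s pos ?mem_s ?mem_head //= (leq_trans le_ya le_ak).
move=> e; rewrite inE mem_cat inE => /or3P[/eqP-> | et | /eqP->].
- exact/mem_s/mem_head.
- by apply: mem_s; rewrite inE et orbT.
- by rewrite inE k_old orbT.
Qed.

Lemma ss_hook_merge xo Lo M a k : ss_hook (xo, Lo, [::]) -> 0 < a <= k -> a <= xo ->
  uniq M -> {in M, forall y, a < y <= xo} -> ss_hook (a, sort leq (M ++ Lo), [:: k]).
Proof.
rewrite ss_hookE => /and3P[_ sorted_old _] /andP[a_gt0 le_ak] le_axo uniq_M M_bounds.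
have lt_xo_Lo : all (ltn xo) Lo := order_path_min ltn_trans sorted_old.
rewrite ss_hookE a_gt0 /= le_ak -/(sorted ltn (a :: _)) !andbT; apply: sorted_ltn_sort.
  rewrite cat_uniq uniq_M (sorted_uniq ltn_trans ltnn (path_sorted sorted_old)) andbT /=.
  apply/hasPn => y yLo; apply/negP => /M_bounds/andP[_]; apply/negP.
  by rewrite -ltnNge; apply: (allP lt_xo_Lo).
apply/allP => y; rewrite mem_cat => /orP[/M_bounds/andP[] // | yLo].
exact: leq_ltn_trans le_axo (allP lt_xo_Lo y yLo).
Qed.

Lemma updE T i j o r c : upd T i j o r c = if (r, c) == (i, j) then o else T r c.
Proof. by []. Qed.

Lemma cellT_Some T r c U : T r c = Some U -> cellT T r c = U.
Proof. by rewrite /cellT => ->. Qed.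

Lemma in_shape_mono la r c i j : is_partition la -> in_shape la r c ->
  0 < i <= r -> 0 < j <= c -> in_shape la i j.
Proof.
case/andP=> sorted_la _ /and4P[r_gt0 r_le c_gt0 c_le] /andP[i_gt0 le_ir] /andP[j_gt0 le_jc].
rewrite /in_shape i_gt0 j_gt0 (leq_trans le_ir r_le) /=.
apply: leq_trans le_jc (leq_trans c_le _).
have := sorted_leq_nth (rev_trans leq_trans) leqnn 0 sorted_la.
by apply; rewrite ?inE; lia.
Qed.

Lemma leq_nth_count s m i : sorted geq s -> 0 < m ->
  (m <= nth 0 s i) = (i < count (fun n => m <= n) s).
Proof.
elim: s i => [|y s IH] i sorted_ys m_gt0 /=; first by rewrite nth_nil; case: m m_gt0.
have ge_y : all (geq y) s := order_path_min (rev_trans leq_trans) sorted_ys.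
case: (leqP m y) => [le_my|lt_ym].
  by case: i => [|i] //=; rewrite add1n ltnS IH // (path_sorted sorted_ys).
have -> : count (fun n => m <= n) s = 0.
  apply/eqP; rewrite -leqn0 leqNgt -has_count; apply/hasP => -[z z_s le_mz].
  by have := leq_trans le_mz (allP ge_y z z_s); rewrite leqNgt lt_ym.
case: i => [|i] /=; first by rewrite leqNgt lt_ym.
case: (ltnP i (size s)) => [lt_is|le_si]; last by rewrite nth_default // leqNgt m_gt0.
apply/negbTE; rewrite -ltnNge; apply: leq_ltn_trans lt_ym.
exact: (allP ge_y) (mem_nth 0 lt_is).
Qed.

Lemma is_partition_incr_nth la h : is_partition la -> h < size la ->
  (0 < h -> nth 0 la h < nth 0 la h.-1) -> is_partition (incr_nth la h).
Proof.
case/andP=> sorted_la pos_la lt_h lt_prev; apply/andP; split.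
  apply/(sortedP 0) => i; rewrite size_incr_nth lt_h !nth_incr_nth => lt_i.
  have := (sortedP 0 sorted_la) i lt_i; rewrite /=.
  by case: (eqVneq h i.+1) lt_prev => [-> /(_ isT)|_ _] /=; lia.
apply/(all_nthP 0) => i; rewrite size_incr_nth lt_h nth_incr_nth => lt_i.
by have := (all_nthP 0 pos_la) i lt_i; rewrite /=; lia.
Qed.

Lemma in_shape_incr_nth la h i j : h < size la ->
  in_shape (incr_nth la h) i j = in_shape la i j || ((i, j) == (h.+1, (nth 0 la h).+1)).
Proof.
move=> lt_h; rewrite /in_shape size_incr_nth lt_h nth_incr_nth xpair_eqE.
case: i => [|i] //=; rewrite eqSS; case: (eqVneq h i) lt_h => [->|_] /=; lia.
Qed.

Section HVTCells.

Variables (la : seq nat) (T : tableau).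
Hypothesis HT : is_HVT la T.

Lemma HVT_cell r c : in_shape la r c -> T r c = Some (cellT T r c).
Proof. by case: HT => _ dom _ _ _; rewrite -dom /cellT; case: (T r c). Qed.

Lemma HVT_in_shape r c U : T r c = Some U -> in_shape la r c.
Proof. by case: HT => _ dom _ _ _ TU; rewrite -dom TU. Qed.

Lemma HVT_ss_hook r c : in_shape la r c -> ss_hook (cellT T r c).
Proof. by case: HT => _ _ ss _ _ /HVT_cell; apply: ss. Qed.

Lemma HVT_row r c c' : c < c' -> in_shape la r c -> in_shape la r c' ->
  hmax (cellT T r c) <= hmin (cellT T r c').
Proof. by case: HT => _ _ _ row _ lt /HVT_cell rc /HVT_cell rc'; apply: row lt rc rc'. Qed.

Lemma HVT_col r r' c : r < r' -> in_shape la r c -> in_shape la r' c ->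
  hmax (cellT T r c) < hmin (cellT T r' c).
Proof. by case: HT => _ _ _ _ col lt /HVT_cell rc /HVT_cell r'c; apply: col lt rc r'c. Qed.

Lemma HVT_southwest i j r c : 0 < i <= r -> 0 < j <= c -> (i, j) != (r, c) ->
  in_shape la r c -> hmax (cellT T i j) <= hmin (cellT T r c).
Proof.
case: HT => part _ _ _ _ /andP[i_gt0 le_ir] /andP[j_gt0 le_jc] ne rc.
have ic : in_shape la i c by apply: in_shape_mono part rc _ _; rewrite ?i_gt0 ?j_gt0 //=; lia.
have ij : in_shape la i j by apply: in_shape_mono part rc _ _; rewrite ?i_gt0 ?j_gt0.
case: (ltnP i r) => [lt_ir|le_ri].
  apply: ltnW; apply: leq_ltn_trans (HVT_col lt_ir ic rc).
  case: (ltngtP j c) => [lt_jc||->] //; last by lia.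
  exact: leq_trans (HVT_row lt_jc ij ic) (hmin_leq_hmax _).
have Er : i = r by lia.
by subst i; apply: HVT_row ij rc; move: ne; rewrite xpair_eqE eqxx /=; lia.
Qed.

End HVTCells.

Lemma HVT_shrink la T r c U : is_HVT la T -> in_shape la r c -> ss_hook U ->
  hmin (cellT T r c) <= hmin U -> hmax U <= hmax (cellT T r c) ->
  is_HVT la (upd T r c (Some U)).
Proof.
move=> HT rc ssU le_min le_max; have [part dom ss row col] := HT.
have shrunk i j W : upd T r c (Some U) i j = Some W ->
    [/\ T i j = Some (cellT T i j), hmin (cellT T i j) <= hmin W & hmax W <= hmax (cellT T i j)].
  rewrite updE; case: eqP => [[-> ->] [<-]|_ TW]; first by rewrite -(HVT_cell HT rc).
  by rewrite (cellT_Some TW).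
split=> //.
- by move=> i j; rewrite updE; case: ifP => [/eqP[-> ->]|_]; rewrite ?rc ?dom.
- by move=> i j W; rewrite updE; case: eqP => [_ [<-] //|_]; apply: ss.
- move=> i j j' W W' lt /shrunk[TW ? ?] /shrunk[TW' ? ?].
  by have := row _ _ _ _ _ lt TW TW'; lia.
- move=> i i' j W W' lt /shrunk[TW ? ?] /shrunk[TW' ? ?].
  by have := col _ _ _ _ _ lt TW TW'; lia.
Qed.

Lemma HVT_place la la' T (i j : nat) V a :
  is_HVT la T -> is_partition la' ->
  (forall r c, in_shape la' r c = in_shape la r c || ((r, c) == (i, j))) ->
  ss_hook V ->
  (forall e, e \in hentries V -> a <= e \/ in_shape la i j /\ hmin (cellT T i j) <= e) ->
  (in_shape la i j -> hmax V <= hmax (cellT T i j)) ->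
  (forall c, c < j -> in_shape la i c -> hmax (cellT T i c) <= a) ->
  (forall r, r < i -> in_shape la r j -> hmax (cellT T r j) < a) ->
  is_HVT la' (upd T i j (Some V)).
Proof.
move=> HT part' shape' ssV lowV highV left_le below_lt; have [part dom ss row col] := HT.
have /and4P[i_gt0 _ j_gt0 _] : in_shape la' i j by rewrite shape' eqxx orbT.
have leq_hminV n : n <= a -> (in_shape la i j -> n <= hmin (cellT T i j)) -> n <= hmin V.
  move=> le_na le_nold; apply: leq_hmin => e /lowV[le_ae|[ij le_e]]; first exact: leq_trans le_ae.
  exact: leq_trans (le_nold ij) le_e.
have left_of c W : c < j -> T i c = Some W -> hmax W <= hmin V.
  move=> lt_cj TW; have ic := HVT_in_shape HT TW; rewrite -(cellT_Some TW).
  apply: leq_hminV; first exact: left_le.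
  by move=> ij; exact: (HVT_row HT lt_cj ic ij).
have below_of r W : r < i -> T r j = Some W -> hmax W < hmin V.
  move=> lt_ri TW; have rj := HVT_in_shape HT TW; rewrite -(cellT_Some TW).
  apply: leq_hminV; first exact: below_lt.
  by move=> ij; exact: (HVT_col HT lt_ri rj ij).
have right_of c W : j < c -> T i c = Some W -> hmax V <= hmin W.
  move=> lt_jc TW; have ic := HVT_in_shape HT TW; rewrite -(cellT_Some TW).
  have ij : in_shape la i j by apply: in_shape_mono part ic _ _; rewrite ?i_gt0 ?j_gt0 //= ltnW.
  exact: leq_trans (highV ij) (HVT_row HT lt_jc ij ic).
have above_of r W : i < r -> T r j = Some W -> hmax V < hmin W.
  move=> lt_ir TW; have rj := HVT_in_shape HT TW; rewrite -(cellT_Some TW).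
  have ij : in_shape la i j by apply: in_shape_mono part rj _ _; rewrite ?i_gt0 ?j_gt0 //= ltnW.
  exact: leq_ltn_trans (highV ij) (HVT_col HT lt_ir ij rj).
split=> //.
- by move=> r c; rewrite updE shape'; case: ifP => _; rewrite ?orbT ?orbF ?dom.
- by move=> r c W; rewrite updE; case: ifP => [_ [<-] //|_]; apply: ss.
- move=> r c c' W W' lt; rewrite !updE.
  case: ifP => [/eqP[-> Ec] [<-]|_ TW].
    case: ifP => [/eqP[Ec'] _|_ TW']; first by move: lt; rewrite Ec Ec' ltnn.
    by apply: right_of TW'; rewrite -Ec.
  case: ifP => [/eqP[Er Ec'] [<-]|_ TW']; last exact: row lt TW TW'.
  by rewrite Er in TW; apply: left_of TW; rewrite -Ec'.
- move=> r r' c W W' lt; rewrite !updE.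
  case: ifP => [/eqP[Er ->] [<-]|_ TW].
    case: ifP => [/eqP[Er'] _|_ TW']; first by move: lt; rewrite Er Er' ltnn.
    by apply: above_of TW'; rewrite -Er.
  case: ifP => [/eqP[Er' Ec] [<-]|_ TW']; last exact: col lt TW TW'.
  by rewrite Ec in TW; apply: below_of TW; rewrite -Er'.
Qed.

Lemma HVT_bump la la' T r c U i V a :
  is_HVT la T -> in_shape la r c -> i <= r ->
  ss_hook U -> {subset hentries U <= hentries (cellT T r c)} ->
  hmin U <= a -> (i = r -> hmax U <= a) ->
  is_partition la' ->
  (forall r' c', in_shape la' r' c' = in_shape la r' c' || ((r', c') == (i, c.+1))) ->
  ss_hook V ->
  (forall e, e \in hentries V -> a <= e \/ in_shape la i c.+1 /\ hmin (cellT T i c.+1) <= e) ->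
  (in_shape la i c.+1 -> hmax V <= hmax (cellT T i c.+1)) ->
  (forall r', r' < i -> in_shape la r' c.+1 -> hmax (cellT T r' c.+1) < a) ->
  is_HVT la' (upd (upd T r c (Some U)) i c.+1 (Some V)).
Proof.
move=> HT rc le_ir ssU sub_U le_Ua le_Ua_row part' shape' ssV lowV highV below_lt.
have HT' := HVT_shrink HT rc ssU (hmin_subset sub_U) (hmax_subset sub_U).
have next_col r' : cellT (upd T r c (Some U)) r' c.+1 = cellT T r' c.+1.
  by rewrite /cellT updE xpair_eqE (gtn_eqF (ltnSn c)) andbF.
have U_rc : cellT (upd T r c (Some U)) r c = U by rewrite /cellT updE eqxx.
have left_le c' : c' < c.+1 -> in_shape la i c' -> hmax (cellT (upd T r c (Some U)) i c') <= a.
  move=> lt_c'c /and4P[i_gt0 _ c'_gt0 _].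
  have [[Ei ->]|ne] := eqVneq (i, c') (r, c); first by rewrite Ei U_rc; apply: le_Ua_row.
  rewrite ltnS in lt_c'c.
  by apply: leq_trans (HVT_southwest HT' _ _ ne rc) _; rewrite ?U_rc ?i_gt0 ?c'_gt0.
apply: (HVT_place (a := a) HT'); rewrite ?next_col //.
by move=> r'; rewrite next_col; apply: below_lt.
Qed.

Lemma HVT_bump_new_cell la T r c U V a :
  is_HVT la T -> in_shape la r c -> a <= hmax (cellT T r c) ->
  (forall i e, in_shape la i c.+1 -> e \in hentries (cellT T i c.+1) -> e < a) ->
  ss_hook U -> {subset hentries U <= hentries (cellT T r c)} -> hmin U <= a ->
  ((count (fun n => c.+1 <= n) la).+1 = r -> hmax U <= a) ->
  ss_hook V -> (forall e, e \in hentries V -> a <= e) ->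
  is_HVT (incr_nth la (count (fun n => c.+1 <= n) la))
         (upd (upd T r c (Some U)) (count (fun n => c.+1 <= n) la).+1 c.+1 (Some V)).
Proof.
move=> HT rc le_a_max col_lt ssU sub_U le_Ua le_Ua_row ssV lowV.
have [part _ _ _ _] := HT; have sorted_la : sorted geq la by case/andP: part.
have /and4P[r_gt0 r_le c_gt0 c_le] := rc.
have col_shape i : 0 < i -> in_shape la i c.+1 = (i <= count (fun n => c.+1 <= n) la).
  move=> i_gt0; have := count_size (fun n => c.+1 <= n) la.
  by rewrite /in_shape (leq_nth_count _ sorted_la) //; lia.
set h := count _ la in le_Ua_row col_shape *.
have lt_hr : h < r.
  rewrite ltnNge; apply/negP => le_rh.
  have rc1 : in_shape la r c.+1 by rewrite col_shape.
  have := col_lt _ _ rc1 (hmin_mem _); have := HVT_row HT (ltnSn c) rc rc1; lia.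
have h1c : in_shape la h.+1 c by apply: in_shape_mono part rc _ _; rewrite ?c_gt0 ?leqnn.
have nth_h : nth 0 la h = c.
  by move: h1c (col_shape h.+1 isT); rewrite /in_shape /= ltnn; lia.
have lt_hs : h < size la by case/and4P: h1c.
have part' : is_partition (incr_nth la h).
  apply: is_partition_incr_nth => // h_gt0.
  by rewrite nth_h (leq_nth_count _ sorted_la) // -/h; lia.
apply: (HVT_bump (a := a) HT rc lt_hr) => //.
- by move=> i j; rewrite in_shape_incr_nth // nth_h.
- by move=> e /lowV; left.
- by rewrite col_shape // ltnn.
- by move=> i _ ic1; apply: col_lt ic1 (hmax_mem _).
Qed.

Lemma HVT_bump_old_cell la T r c U i k V a :
  is_HVT la T -> in_shape la r c -> a <= hmax (cellT T r c) ->
  in_shape la i c.+1 -> k \in hentries (cellT T i c.+1) ->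
  (forall i' e, in_shape la i' c.+1 -> e \in hentries (cellT T i' c.+1) -> a <= e -> k <= e) ->
  ss_hook U -> {subset hentries U <= hentries (cellT T r c)} -> hmin U <= a ->
  (i = r -> hmax U <= a) ->
  ss_hook V -> (forall e, e \in hentries V -> a <= e \/ hmin (cellT T i c.+1) <= e) ->
  hmax V <= hmax (cellT T i c.+1) ->
  is_HVT la (upd (upd T r c (Some U)) i c.+1 (Some V)).
Proof.
move=> HT rc le_a_max ic1 k_in k_min ssU sub_U le_Ua le_Ua_row ssV lowV highV.
have [part _ _ _ _] := HT; have /and4P[r_gt0 _ _ _] := rc.
have le_ir : i <= r.
  rewrite leqNgt; apply/negP => lt_ri.
  have rc1 : in_shape la r c.+1.
    by apply: in_shape_mono part ic1 _ _; rewrite ?r_gt0 ?(ltnW lt_ri) ?leqnn.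
  have le_k : k <= hmin (cellT T r c.+1).
    exact: k_min rc1 (hmin_mem _) (leq_trans le_a_max (HVT_row HT (ltnSn c) rc rc1)).
  have := leq_trans (HVT_col HT lt_ri rc1 ic1) (hmin_leq k_in).
  by rewrite ltnNge (leq_trans le_k (hmin_leq_hmax _)).
apply: (HVT_bump (a := a) HT rc le_ir) => //.
- by move=> i' j; case: eqP => [[-> ->]|_]; rewrite ?ic1 ?orbT ?orbF.
- by move=> e /lowV[]; [left | right].
- move=> i' lt_i'i i'c1; rewrite ltnNge; apply/negP => le_a.
  have := leq_trans (HVT_col HT lt_i'i i'c1 ic1) (hmin_leq k_in).
  by rewrite ltnNge (k_min _ _ i'c1 (hmax_mem _) le_a).
Qed.

Lemma seqmax_map_mem (S : eqType) (f : S -> nat) s : s != [::] ->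
  exists2 p, p \in s & seqmax (map f s) = f p.
Proof.
move=> s_ne; have /mapP[p ps ->] : seqmax (map f s) \in map f s.
  by apply: seqmax_mem; case: s s_ne.
by exists p.
Qed.

Lemma mem_cells la r c : ((r, c) \in cells la) = in_shape la r c.
Proof.
apply/allpairsPdep/idP => [[r' [c' [r'_in c'_in [-> ->]]]] | rc].
  by move: r'_in c'_in; rewrite !mem_iota /in_shape; lia.
by case/and4P: rc => *; exists r, c; split; rewrite ?mem_iota //; lia.
Qed.

Lemma mem_arm_cells la T r c :
  ((r, c) \in arm_cells la T) = in_shape la r c && (hA (cellT T r c) != [::]).
Proof. by rewrite mem_filter mem_cells andbC. Qed.

Definition arm_col la T := seqmax [seq p.2 | p <- arm_cells la T].

Definition arm_row la T :=
  let ACc := [seq p <- arm_cells la T | p.2 == arm_col la T] in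
  let m := seqmax [seq maxarm (cellT T p.1 p.2) | p <- ACc] in
  seqmax [seq p.1 | p <- ACc & maxarm (cellT T p.1 p.2) == m].

Lemma arm_col_max la T p : p \in arm_cells la T -> p.2 <= arm_col la T.
Proof. by move=> pAC; apply/seqmax_geq/map_f. Qed.

Lemma arm_cell_selected la T : arm_cells la T != [::] ->
  (arm_row la T, arm_col la T) \in arm_cells la T.
Proof.
move=> AC_ne; have [p0 p0AC c_eq] := seqmax_map_mem (fun p => p.2) AC_ne.
rewrite /arm_row; set c := arm_col la T; set ACc := [seq p <- _ | p.2 == c].
have ACc_ne : ACc != [::] by rewrite -has_filter; apply/hasP; exists p0; rewrite //= -c_eq.
have [p1 p1C m_eq] := seqmax_map_mem (fun p => maxarm (cellT T p.1 p.2)) ACc_ne.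
set R := [seq p <- ACc | _]; have R_ne : R != [::].
  by rewrite -has_filter; apply/hasP; exists p1; rewrite //= m_eq.
have [[i j]] := seqmax_map_mem (fun p => p.1) R_ne.
by rewrite !mem_filter => /and3P[_ /eqP /= -> ijAC] ->.
Qed.

Definition candidates la T c a : seq (nat * nat) :=
  [seq q <- [seq (i, e) | i <- [seq i <- iota 1 (size la) | in_shape la i c.+1],
                          e <- hentries (cellT T i c.+1)] | a <= q.2].

Lemma mem_candidates la T c a i e : ((i, e) \in candidates la T c a) =
  [&& a <= e, in_shape la i c.+1 & e \in hentries (cellT T i c.+1)].
Proof.
rewrite mem_filter; congr (_ && _).
apply/allpairsPdep/andP => [[i' [e' [i'_in e'_in [-> ->]]]] | [ic1 e_in]].
  by move: i'_in; rewrite mem_filter => /andP[].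
exists i, e; split=> //; rewrite mem_filter ic1 mem_iota.
by case/and4P: ic1; lia.
Qed.

Lemma min_snd_mem (s : seq (nat * nat)) : s != [::] ->
  let k := foldr minn (head 0 [seq q.2 | q <- s]) [seq q.2 | q <- s] in
  ((nth (0, 0) s (index k [seq q.2 | q <- s])).1, k) \in s /\ {in s, forall q, k <= q.2}.
Proof.
move=> s_ne k; split; last by move=> q qs; apply: foldr_minn_leq; rewrite inE map_f ?orbT.
have k_in : k \in [seq q.2 | q <- s].
  have := foldr_minn_mem (head 0 [seq q.2 | q <- s]) [seq q.2 | q <- s].
  by rewrite -/k inE => /orP[/eqP-> | //]; rewrite -nth0 mem_nth // size_map lt0n size_eq0.
have lt_idx : index k [seq q.2 | q <- s] < size s by rewrite -(size_map (fun q => q.2)) index_mem.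
have := mem_nth (0, 0) lt_idx; have := nth_index 0 k_in; rewrite (nth_map (0, 0)) //.
by case: (nth _ _ _) => i e /= ->.
Qed.

Definition bump_at (la : seq nat) (T : tableau) (r c : nat) : seq nat * tableau :=
  let U := cellT T r c in
  let a := last 0 (hA U) in
  let l := last 0 (hL U) in
  let armU := take (size (hA U)).-1 (hA U) in
  let moved := [seq x <- hL U | a < x <= l] in
  let keptL := [seq x <- hL U | ~~ (a < x <= l)] in
  let cand := candidates la T c a in
  if cand is [::] then
    let rt := (count (fun n => c.+1 <= n) la).+1 in
    let la' := incr_nth la rt.-1 in
    if rt != r then
      (la', upd (upd T r c (Some (hH U, hL U, armU))) rt c.+1 (Some (a, [::], [::])))
    else
      (la', upd (upd T r c (Some (hH U, keptL, armU))) r c.+1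
                 (Some (a, sort leq moved, [::])))
  else
    let vals := [seq q.2 | q <- cand] in
    let k := foldr minn (head 0 vals) vals in
    let rt := (nth (0, 0) cand (index k vals)).1 in
    let old := cellT T rt c.+1 in
    if rt != r then
      let Lp := hH old :: hL old in
      let Lp' := set_nth 0 Lp (index k Lp) a in
      (la, upd (upd T r c (Some (hH U, hL U, armU))) rt c.+1
                (Some (head 0 Lp', behead Lp', rcons (hA old) k)))
    else
      (la, upd (upd T r c (Some (hH U, keptL, armU))) r c.+1
                (Some (a, sort leq (moved ++ hL old), rcons (hA old) k))).

Lemma Vb_bump_at la T : arm_cells la T != [::] ->
  Vb la T = bump_at la T (arm_row la T) (arm_col la T).
Proof. by rewrite /Vb /bump_at /arm_row /arm_col /candidates; case: (arm_cells la T). Qed.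

Section BumpAt.

Variables (la : seq nat) (T : tableau) (r c x : nat) (L A : seq nat) (a : nat).
Hypotheses (HT : is_HVT la T) (rc : in_shape la r c) (EU : cellT T r c = (x, L, rcons A a)).

Local Notation kept := [seq y <- L | ~~ (a < y <= last 0 L)].
Local Notation moved := [seq y <- L | a < y <= last 0 L].

Let ssU : ss_hook (x, L, rcons A a). Proof. by rewrite -EU; exact: (HVT_ss_hook HT rc). Qed.

Let take_arm : take (size (rcons A a)).-1 (rcons A a) = A.
Proof. by rewrite size_rcons -cats1 take_size_cat. Qed.

Let ss_residue : ss_hook (x, L, A). Proof. by case: (ss_hook_rcons_arm ssU). Qed.

Let le_xa : x <= a. Proof. by case: (ss_hook_rcons_arm ssU). Qed.

Let a_gt0 : 0 < a. Proof. by case/and3P: ssU => x_gt0 _ _; apply: leq_trans x_gt0 le_xa. Qed.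

Let a_le_hmax : a <= hmax (cellT T r c).
Proof. by rewrite EU; apply: hmax_geq; rewrite !inE mem_cat mem_rcons mem_head !orbT. Qed.

Let residue_sub (L' : seq nat) :
  {subset L' <= L} -> {subset hentries (x, L', A) <= hentries (cellT T r c)}.
Proof.
by move=> sub_L; rewrite EU; apply: hentries_sub => // y yA; rewrite mem_rcons inE yA orbT.
Qed.

Let kept_sub : {subset kept <= L}. Proof. exact: mem_subseq (filter_subseq _ _). Qed.

Let hmin_residue L' : hmin (x, L', A) <= a.
Proof. by apply: leq_trans le_xa; apply: hmin_leq; rewrite mem_head. Qed.

Let ss_kept : ss_hook (x, kept, A).
Proof. exact: ss_hook_filter_leg ss_residue. Qed.

Let hmax_kept : hmax (x, kept, A) <= a.
Proof.
case/and3P: ssU => _ sorted_L _; have [_ _ A_le_a] := ss_hook_rcons_arm ssU.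
apply: geq_hmax => e; rewrite inE mem_cat => /or3P[/eqP-> // | | /(allP A_le_a) //].
exact: kept_leg_leq sorted_L.
Qed.

Let moved_uniq : uniq moved.
Proof.
case/and3P: ssU => _ sorted_L _.
by rewrite filter_uniq // (sorted_uniq ltn_trans ltnn (path_sorted sorted_L)).
Qed.

Let moved_bounds y : y \in moved -> a < y <= hmax (cellT T r c).
Proof.
rewrite mem_filter => /andP[/andP[lt_ay _] yL]; rewrite lt_ay; apply: hmax_geq.
by rewrite EU inE mem_cat yL orbT.
Qed.

Lemma HVT_bump_at_new_cell : candidates la T c a = [::] ->
  is_HVT (bump_at la T r c).1 (bump_at la T r c).2.
Proof.
move=> Ec; rewrite /bump_at EU /hH /hL /hA /= last_rcons take_arm Ec.
have col_lt i e : in_shape la i c.+1 -> e \in hentries (cellT T i c.+1) -> e < a.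
  move=> ic1 e_in; rewrite ltnNge; apply/negP => le_ae.
  by have := mem_candidates la T c a i e; rewrite Ec le_ae ic1 e_in.
case: eqVneq => [Er | ne] /=.
  rewrite -[r in upd _ r c.+1 _]Er.
  apply: (HVT_bump_new_cell (a := a) HT rc a_le_hmax col_lt) => //.
  - exact: residue_sub kept_sub.
  - rewrite ss_hookE a_gt0 sorted_ltn_sort //.
    by apply/allP => y /moved_bounds/andP[].
  - move=> e; rewrite inE mem_cat mem_sort orbF => /orP[/eqP-> // | /moved_bounds/andP[lt_ae _]].
    exact: ltnW.
apply: (HVT_bump_new_cell (a := a) HT rc a_le_hmax col_lt) => //.
- by apply: residue_sub.
- by move=> Er; rewrite Er eqxx in ne.
- by rewrite ss_hookE a_gt0.
- by move=> e; rewrite inE => /eqP->.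
Qed.

Lemma HVT_bump_same_row k xo Lo :
  in_shape la r c.+1 -> cellT T r c.+1 = (xo, Lo, [::]) -> a <= k -> k \in xo :: Lo ->
  (forall i e, in_shape la i c.+1 -> e \in hentries (cellT T i c.+1) -> a <= e -> k <= e) ->
  is_HVT la (upd (upd T r c (Some (x, kept, A))) r c.+1 (Some (a, sort leq (moved ++ Lo), [:: k]))).
Proof.
move=> rc1 Eold le_ak k_old k_least.
have ss_old : ss_hook (xo, Lo, [::]) by rewrite -Eold; exact: (HVT_ss_hook HT rc1).
have Lo_gt_xo : all (ltn xo) Lo by case/and3P: ss_old => _ /(order_path_min ltn_trans).
have k_max : k <= hmax (xo, Lo, [::]) by apply: hmax_geq; rewrite hentriesE cats0.
have le_U_xo : hmax (cellT T r c) <= xo.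
  apply: leq_trans (HVT_row HT (ltnSn c) rc rc1) _.
  by rewrite Eold; apply: hmin_leq; rewrite mem_head.
have le_a_xo := leq_trans a_le_hmax le_U_xo.
have mergedP e : e \in hentries (a, sort leq (moved ++ Lo), [:: k]) ->
    [\/ e = a, e \in moved, e \in Lo | e = k].
  rewrite hentriesE inE mem_cat mem_sort mem_cat !inE -!orbA.
  by case/or4P=> [/eqP | | | /eqP]; [exact: Or41 | exact: Or42 | exact: Or43 | exact: Or44].
apply: (HVT_bump_old_cell (a := a) (k := k) HT rc a_le_hmax rc1) => //;
  rewrite ?Eold ?hentriesE ?cats0 //.
- exact: residue_sub kept_sub.
- apply: ss_hook_merge ss_old _ le_a_xo moved_uniq _; first by rewrite a_gt0.
  by move=> y /moved_bounds/andP[-> /leq_trans]; apply.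
- move=> e /mergedP[-> | /moved_bounds/andP[/ltnW] | eLo | ->]; left => //.
  exact: ltnW (leq_ltn_trans le_a_xo (allP Lo_gt_xo e eLo)).
apply: geq_hmax => e /mergedP[-> | /moved_bounds/andP[_ le_e] | eLo | ->] //.
- exact: leq_trans le_ak k_max.
- by apply: leq_trans (leq_trans le_e le_U_xo) (hmax_geq _); rewrite mem_head.
- by apply: hmax_geq; rewrite hentriesE cats0 inE eLo orbT.
Qed.

Lemma HVT_bump_lower_row i k xo Lo :
  i != r -> in_shape la i c.+1 -> cellT T i c.+1 = (xo, Lo, [::]) -> a <= k -> k \in xo :: Lo ->
  (forall i' e, in_shape la i' c.+1 -> e \in hentries (cellT T i' c.+1) -> a <= e -> k <= e) ->
  let s := set_nth 0 (xo :: Lo) (index k (xo :: Lo)) a in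
  is_HVT la (upd (upd T r c (Some (x, L, A))) i c.+1 (Some (head 0 s, behead s, [:: k]))).
Proof.
move=> ne ic1 Eold le_ak k_old k_least s.
have ss_old : ss_hook (xo, Lo, [::]) by rewrite -Eold; exact: (HVT_ss_hook HT ic1).
have k_max : k <= hmax (xo, Lo, [::]) by apply: hmax_geq; rewrite hentriesE cats0.
have below e : e \in xo :: Lo -> e < k -> e < a.
  move=> e_old lt_ek; rewrite ltnNge; apply/negP => le_ae.
  have := k_least _ _ ic1 _ le_ae; rewrite Eold hentriesE cats0 => /(_ e_old).
  by rewrite leqNgt lt_ek.
have a_k : 0 < a <= k by rewrite a_gt0.
have [ssV subV] := ss_hook_replace ss_old k_old a_k below.
apply: (HVT_bump_old_cell (a := a) (k := k) HT rc a_le_hmax ic1) => //;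
  rewrite ?Eold ?hentriesE ?cats0 //.
- by apply: residue_sub.
- by move=> Ei; rewrite Ei eqxx in ne.
- move=> e /subV; rewrite inE => /orP[/eqP-> | e_old]; [left | right] => //.
  by apply: hmin_leq; rewrite hentriesE cats0.
apply: geq_hmax => e /subV; rewrite inE => /orP[/eqP-> | e_old].
  exact: leq_trans le_ak k_max.
by apply: hmax_geq; rewrite hentriesE cats0.
Qed.

Lemma HVT_bump_at_old_cell : (forall i, in_shape la i c.+1 -> hA (cellT T i c.+1) = [::]) ->
  candidates la T c a != [::] -> is_HVT (bump_at la T r c).1 (bump_at la T r c).2.
Proof.
move=> next_armless Ec; rewrite /bump_at EU /hH /hL /hA /= last_rcons take_arm.
have [qk_in k_min] := min_snd_mem Ec; have mem_cand := mem_candidates la T c a.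
move: Ec qk_in k_min mem_cand; case: (candidates la T c a) => [// | q s] _.
set k := foldr minn _ _; set rt := (nth _ _ _).1 => qk_in k_min mem_qs.
move: qk_in; rewrite mem_qs => /and3P[le_ak rt_c1 k_old].
have k_least i e : in_shape la i c.+1 -> e \in hentries (cellT T i c.+1) -> a <= e -> k <= e.
  by move=> ic1 e_in le_ae; apply: (k_min (i, e)); rewrite mem_qs le_ae ic1 e_in.
case Eold: (cellT T rt c.+1) k_old => [[xo Lo] Ao] k_old.
have Ao_nil : Ao = [::] by move: (next_armless _ rt_c1); rewrite Eold.
subst Ao; rewrite hentriesE cats0 in k_old.
case: eqVneq => [Er | ne] /=; last exact: HVT_bump_lower_row ne rt_c1 Eold le_ak k_old k_least.
by move: rt_c1 Eold; rewrite Er => rc1 Eold; apply: HVT_bump_same_row rc1 Eold le_ak k_old k_least.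
Qed.

End BumpAt.

Theorem lemma3p3 (la : seq nat) (T : tableau) :
  is_HVT la T -> is_HVT (Vb la T).1 (Vb la T).2.
Proof.
move=> HT; have [AC_nil | AC_ne] := eqVneq (arm_cells la T) [::]; first by rewrite /Vb AC_nil.
rewrite (Vb_bump_at AC_ne); have := arm_cell_selected AC_ne.
set r := arm_row la T; set c := arm_col la T; rewrite mem_arm_cells => /andP[rc].
have next_armless i : in_shape la i c.+1 -> hA (cellT T i c.+1) = [::].
  move=> ic1; apply/eqP; apply: contraT => armed.
  by have := @arm_col_max la T (i, c.+1); rewrite mem_arm_cells ic1 armed -/c ltnn => /(_ isT).
case EU: (cellT T r c) => [[x L] A] /=; case/lastP: A EU => [// | A a] EU _.
have [Ec | Ec] := eqVneq (candidates la T c a) [::].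
  exact: HVT_bump_at_new_cell HT rc EU Ec.
exact: HVT_bump_at_old_cell HT rc EU next_armless Ec.
Qed.
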